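(* For every integer $N\ge 0$, let $T_{1\times 3}(6,N)$ be the number of tilings of a $6\times n$ rectangle, $n=N/2$, by $N$ tiles of size $1\times 3$ (and $0$ if $N$ is odd). Then, as formal power series, \[ \sum_{N\ge 0} T_{1\times 3}(6,N)\,z^N=\frac{(1-z^6)^2(1-z^4-z^6)}{1-z^2-z^4-7z^6+z^8+5z^{10}+10z^{12}+z^{14}-3z^{16}-5z^{18}-z^{20}+z^{22}+z^{24}}. \]
   Context: A tiling of an $m\times n$ rectangle (width $m$, length $n$, made of $mn$ unit squares) by $a\times b$ tiles is a partition of the rectangle into non-overlapping axis-parallel $a\times b$ rectangles with integer corner coordinates, each placed in either of its two orientations. Tilings related by reflections or rotations of the rectangle are counted as distinct. The empty tiling counts once for $N=0$. *)

From mathcomp Require Import all_boot all_order all_algebra.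
Set Implicit Arguments. Unset Strict Implicit. Unset Printing Implicit Defensive.
Import GRing.Theory.

Definition cell (m n : nat) := ('I_m * 'I_n)%type.

Definition is_block (m n p q : nat) (A : {set cell m n}) : bool :=
  [exists x : 'I_m.+1, exists y : 'I_n.+1,
    [&& x + p <= m, y + q <= n &
        A == [set c : cell m n | (x <= c.1 < x + p) && (y <= c.2 < y + q)]]].

Definition is_tile (m n a b : nat) (A : {set cell m n}) : bool :=
  @is_block m n a b A || @is_block m n b a A.

Definition is_tiling (m n a b : nat) (P : {set {set cell m n}}) : bool :=
  partition P [set: cell m n] && [forall A in P, @is_tile m n a b A].

Definition num_tilings (m n a b N : nat) : nat :=
  #|[set P : {set {set cell m n}} | @is_tiling m n a b P && (#|P| == N)]|.

Definition T13_6 (N : nat) : nat :=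
  if odd N then 0 else num_tilings 6 N./2 1 3 N.

Local Open Scope ring_scope.

Definition gf_num : {poly int} :=
  (1 - 'X^6) ^+ 2 * (1 - 'X^4 - 'X^6).

Definition gf_den : {poly int} :=
  1 - 'X^2 - 'X^4 - 7%:R *: 'X^6 + 'X^8 + 5%:R *: 'X^10 + 10%:R *: 'X^12
    + 'X^14 - 3%:R *: 'X^16 - 5%:R *: 'X^18 - 'X^20 + 'X^22 + 'X^24.

(* Tile the 6 x n rectangle column by column, always covering the lowest free
   cell of the leftmost unfinished column: the tile there either lies in the
   column or reaches across the next two.  This makes the tilings the walks of
   a finite transfer automaton whose states record which cells of the next two
   columns are already covered, so the number of tilings is e_0 M^n 1 for a
   transfer matrix M.  The identity then says that the coefficients of gf_den
   annihilate this sequence beyond the degree of gf_num; this is certified by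
   computing the rows e_0 M^k and checking that their gf_den-weighted
   combination cancels, together with the first 28 coefficients. *)
From mathcomp Require Import all_boot all_order all_algebra zify ring.
Import GRing.Theory.
Set Implicit Arguments. Unset Strict Implicit. Unset Printing Implicit Defensive.

Section Tilings.
Variables (T : finType) (S : {set {set T}}).

Definition tilings (U : {set T}) : {set {set {set T}}} :=
  [set P | partition P U && (P \subset S)].

Definition ntilings (U : {set T}) : nat := #|tilings U|.

Lemma ntilings0 : ntilings set0 = 1.
Proof.
rewrite /ntilings (_ : tilings set0 = [set set0]) ?cards1 //.
by apply/setP => P; rewrite !inE partition_set0; case: eqP => [->|]; rewrite ?sub0set.
Qed.

Lemma tile_notin_tilingsD (U A : {set T}) c (Q : {set {set T}}) :
  c \in A -> Q \in tilings (U :\: A) -> A \notin Q.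
Proof.
move=> cA; rewrite inE => /andP[pQ _]; apply/negP => AQ.
by have := subsetP (partitionS pQ AQ) c cA; rewrite inE cA.
Qed.

Lemma tilings_pblock (U A : {set T}) c : A \in S -> c \in A -> A \subset U ->
  [set P | (P \in tilings U) && (pblock P c == A)] = (fun Q => A |: Q) @: tilings (U :\: A).
Proof.
move=> AS cA AU; apply/setP => P; apply/idP/imsetP.
- rewrite !inE => /andP[/andP[pP sPS] /eqP pbA].
  have AP : A \in P by rewrite -pbA pblock_mem // (cover_partition pP) (subsetP AU).
  exists (P :\ A); last by rewrite setD1K.
  by rewrite inE partitionD1 //= (subset_trans _ sPS) ?subsetDl.
- move=> [Q QU ->]; have /andP[pQ sQS] : partition Q (U :\: A) && (Q \subset S).
    by rewrite inE in QU.
  have A0 : A != set0 by apply/set0Pn; exists c.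
  have disA : [disjoint A & U :\: A].
    by rewrite disjoints_subset; apply/subsetP => x xA; rewrite !inE xA.
  have pAQ := partitionU1 pQ A0 disA.
  have UA : A :|: U :\: A = U by rewrite -{1}(setIidPr AU) setID.
  rewrite UA in pAQ.
  rewrite !inE pAQ subUset sub1set AS sQS /=.
  by rewrite (def_pblock (partition_trivIset pAQ) (setU11 _ _) cA).
Qed.

Lemma ntilings_pblock (U : {set T}) c : c \in U ->
  ntilings U = \sum_(A | (A \in S) && (c \in A) && (A \subset U)) ntilings (U :\: A).
Proof.
move=> cU; rewrite /ntilings -sum1_card.
rewrite (partition_big (pblock^~ c) (fun A => (A \in S) && (c \in A) && (A \subset U))).
  apply: eq_bigr => A /andP[/andP[AS cA] AU].
  rewrite sum1dep_card tilings_pblock // card_in_imset // => Q1 Q2 Q1U Q2U /= E.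
  by rewrite -(setU1K (tile_notin_tilingsD cA Q1U)) E setU1K // (tile_notin_tilingsD cA Q2U).
move=> P; rewrite inE => /andP[pP sPS].
have cP : c \in cover P by rewrite (cover_partition pP).
have Pc := pblock_mem cP.
by rewrite (subsetP sPS _ Pc) mem_pblock cP (partitionS pP Pc).
Qed.

End Tilings.

Lemma card_ord_interval m x p : x + p <= m -> #|[set i : 'I_m | x <= i < x + p]| = p.
Proof.
elim: p => [|p IH] xpm.
  by apply/eqP; rewrite cards_eq0; apply/eqP/setP => i; rewrite !inE addn0; case: leqP.
have xpm' : x + p < m by rewrite addnS in xpm.
rewrite (_ : [set i : 'I_m | _] = Ordinal xpm' |: [set i : 'I_m | x <= i < x + p]).
  by rewrite cardsU1 IH ?(ltnW xpm') // inE /= ltnn andbF.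
apply/setP => i; rewrite !inE addnS ltnS [i <= _]leq_eqVlt.
case: (eqVneq i (Ordinal xpm')) => [->|ne] /=; first by rewrite leq_addr eqxx.
suff -> : (val i == x + p) = false by [].
by apply: contraNF ne => /eqP ipx; apply/eqP/val_inj.
Qed.

Lemma card_block m n p q (A : {set cell m n}) : is_block p q A -> #|A| = p * q.
Proof.
case/existsP => x /existsP [y /and3P[xpm yqn /eqP ->]].
rewrite (_ : [set c : cell m n | _] =
  setX [set i : 'I_m | x <= i < x + p] [set j : 'I_n | y <= j < y + q]).
  by rewrite cardsX !card_ord_interval.
by apply/setP => c; rewrite !inE.
Qed.

Definition tiles13 n : {set {set cell 6 n}} := [set A | is_tile 1 3 A].

(* Every tile has 3 cells, so a tiling of the 6 x n rectangle has 2n tiles. *)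
Lemma num_tilings_ntilings n : num_tilings 6 n 1 3 n.*2 = ntilings (tiles13 n) setT.
Proof.
rewrite /num_tilings /ntilings; apply: eq_card => P; rewrite !inE /is_tiling.
have -> : [forall A in P, is_tile 1 3 A] = (P \subset tiles13 n).
  by apply/forall_inP/subsetP => tP A AP; [rewrite inE tP | have := tP A AP; rewrite inE].
case pP: (partition P setT) => //=; case: (boolP (P \subset _)) => //= sPt.
have := card_partition pP; rewrite cardsT card_prod !card_ord.
rewrite (eq_bigr (fun _ => 3)) => [cardP|A AP]; last first.
  by have := subsetP sPt A AP; rewrite inE /is_tile => /orP[] /card_block ->.
move: cardP; rewrite sum_nat_const => cardP.
apply/eqP; rewrite -muln2; apply/eqP.
by rewrite -(eqn_pmul2r (isT : 0 < 3)) -cardP mulnC -mulnA.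
Qed.

(* A column profile [a] marks the already covered cells of a column: row [r] is
   covered iff [bit a r]; rows beyond [size a] are free. *)
Definition bit (a : seq bool) i := nth false a i.
Arguments bit : simpl never.

Definition setbit (a : seq bool) i := set_nth false a i true.

Lemma bit_setbit a i k : bit (setbit a i) k = (k == i) || bit a k.
Proof. by rewrite /bit /setbit nth_set_nth /=; case: eqP. Qed.

Lemma bit_nil k : bit [::] k = false.
Proof. by rewrite /bit nth_nil. Qed.

Definition nholes (a : seq bool) : nat := \sum_(k < 6) ~~ bit a k.

Lemma nholes_lt7 a : nholes a < 7.
Proof.
rewrite ltnS -[6]card_ord -sum1_card.
by apply: leq_sum => k _; case: (bit a k).
Qed.

Lemma nholes_setbit_le a i : nholes (setbit a i) <= nholes a.
Proof.
by apply: leq_sum => k _; rewrite bit_setbit; case: (bit a k); rewrite ?orbT ?leq_b1.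
Qed.

Lemma nholes_setbit a i (lti6 : i < 6) : bit a i = false ->
  nholes a = (nholes (setbit a i)).+1.
Proof.
move=> ai; rewrite /nholes (bigD1 (Ordinal lti6)) // [in RHS](bigD1 (Ordinal lti6)) //=.
rewrite bit_setbit eqxx ai /= add1n.
congr _.+1; apply: eq_bigr => k /negbTE ki.
by rewrite bit_setbit (_ : (val k == i) = false).
Qed.

Lemma bit_find_hole a : find negb a < 6 -> bit a (find negb a) = false.
Proof.
case: (boolP (has negb a)) => [ha _|/hasNfind ->]; last by rewrite /bit nth_default.
by have := nth_find false ha; rewrite /bit; case: (nth _ _ _).
Qed.

Lemma bit_before_hole a k : k < find negb a -> bit a k.
Proof. by move/(before_find false); rewrite /bit; case: (nth _ _ _). Qed.

(* The profiles (b', c') of the next two columns obtained by covering the free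
   cells of a column of profile [a], lowest free cell first, either by a tile
   lying in the column or, when [h], by a tile reaching across the next two
   columns (of profiles [b] and [c]); [f] is fuel, larger than [nholes a]. *)
Fixpoint fill_column (h : bool) (f : nat) (a b c : seq bool) : seq (seq bool * seq bool) :=
  if f is f.+1 then
    let i := find negb a in
    if 6 <= i then [:: (b, c)] else
    (if h && ~~ bit b i && ~~ bit c i
     then fill_column h f (setbit a i) (setbit b i) (setbit c i) else [::]) ++
    (if (i + 3 <= 6) && ~~ bit a i.+1 && ~~ bit a i.+2
     then fill_column h f (setbit (setbit (setbit a i) i.+1) i.+2) b c else [::])
  else [::].

Definition covered j a b c (r k : nat) :=
  ((k == j) && bit a r) || ((k == j.+1) && bit b r) || ((k == j.+2) && bit c r).

(* The cells left to tile once columns [0, j) are tiled and the cells of columns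
   j, j+1, j+2 marked in the profiles a, b, c are covered. *)
Definition region n j a b c : {set cell 6 n} :=
  [set x : cell 6 n | (j <= x.2) && ~~ covered j a b c x.1 x.2].

Definition htile n j i : {set cell 6 n} :=
  [set x : cell 6 n | (i <= x.1 < i + 1) && (j <= x.2 < j + 3)].

Definition vtile n j i : {set cell 6 n} :=
  [set x : cell 6 n | (i <= x.1 < i + 3) && (j <= x.2 < j + 1)].

Section TilesAtHole.
Variables (n j : nat) (a b c : seq bool) (i : nat).
Hypotheses (ltjn : j < n) (lti6 : i < 6).
Hypotheses (ai : bit a i = false) (a_below_i : forall k, k < i -> bit a k).

Definition hole : cell 6 n := (Ordinal lti6, Ordinal ltjn).

Definition htile_fits := (j + 3 <= n) && ~~ bit b i && ~~ bit c i.
Definition vtile_fits := (i + 3 <= 6) && ~~ bit a i.+1 && ~~ bit a i.+2.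

Lemma mem_region r k (ltr6 : r < 6) (ltkn : k < n) :
  ((Ordinal ltr6, Ordinal ltkn) \in region n j a b c) = (j <= k) && ~~ covered j a b c r k.
Proof. by rewrite inE. Qed.

Lemma hole_in_region : hole \in region n j a b c.
Proof. rewrite mem_region /covered ai; lia. Qed.

(* Nothing of the region lies before the hole in column-then-row order, so a
   tile of the region containing the hole has it as its lower corner. *)
Lemma block13_at_hole A : is_block 1 3 A -> hole \in A -> A \subset region n j a b c ->
  htile_fits && (A == htile n j i).
Proof.
case/existsP => x /existsP [y /and3P[x1 y3 /eqP ->]].
rewrite inE /= => /andP[hx hy] /subsetP sub.
have xi : x = i :> nat by lia.
have yj : y = j :> nat.
  case: (ltngtP y j) => // ltyj; last by lia.
  have lty : y < n by lia.
  have ltx : x < 6 by lia.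
  by have := sub (Ordinal ltx, Ordinal lty); rewrite inE /= mem_region; lia.
have bi : bit b i = false.
  have ltj1 : j.+1 < n by lia.
  by have := sub (Ordinal lti6, Ordinal ltj1); rewrite inE /= mem_region /covered xi yj; lia.
have ci : bit c i = false.
  have ltj2 : j.+2 < n by lia.
  by have := sub (Ordinal lti6, Ordinal ltj2); rewrite inE /= mem_region /covered xi yj; lia.
rewrite /htile_fits bi ci -yj; apply/andP; split; first by lia.
by apply/eqP/setP => z; rewrite !inE xi yj.
Qed.

Lemma block31_at_hole A : is_block 3 1 A -> hole \in A -> A \subset region n j a b c ->
  vtile_fits && (A == vtile n j i).
Proof.
case/existsP => x /existsP [y /and3P[x3 y1 /eqP ->]].
rewrite inE /= => /andP[hx hy] /subsetP sub.
have yj : y = j :> nat by lia.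
have xi : x = i :> nat.
  case: (ltngtP x i) => // ltxi; last by lia.
  have ltx : x < 6 by lia.
  by have := sub (Ordinal ltx, Ordinal ltjn); rewrite inE /= mem_region /covered a_below_i; lia.
have ai1 : bit a i.+1 = false.
  have lti1 : i.+1 < 6 by lia.
  by have := sub (Ordinal lti1, Ordinal ltjn); rewrite inE /= mem_region /covered xi yj; lia.
have ai2 : bit a i.+2 = false.
  have lti2 : i.+2 < 6 by lia.
  by have := sub (Ordinal lti2, Ordinal ltjn); rewrite inE /= mem_region /covered xi yj; lia.
rewrite /vtile_fits ai1 ai2 -xi; apply/andP; split; first by lia.
by apply/eqP/setP => z; rewrite !inE xi yj.
Qed.

Lemma htile_at_hole : htile_fits ->
  [&& htile n j i \in tiles13 n, hole \in htile n j i & htile n j i \subset region n j a b c].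
Proof.
case/andP => /andP[j3n bi] ci.
have lti7 : i < 7 by lia.
have ltjn1 : j < n.+1 by lia.
apply/and3P; split; last 1 first.
- apply/subsetP => -[z1 z2]; rewrite !inE /= => /andP[z1i z2j].
  have -> : z1 = i :> nat by lia.
  rewrite /covered ai (negbTE bi) (negbTE ci); lia.
- rewrite inE /is_tile; apply/orP; left; apply/existsP; exists (Ordinal lti7).
  by apply/existsP; exists (Ordinal ltjn1); rewrite /= j3n eqxx andbT; lia.
- by rewrite inE /=; lia.
Qed.

Lemma vtile_at_hole : vtile_fits ->
  [&& vtile n j i \in tiles13 n, hole \in vtile n j i & vtile n j i \subset region n j a b c].
Proof.
case/andP => /andP[i36 ai1] ai2.
have lti7 : i < 7 by lia.
have ltjn1 : j < n.+1 by lia.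
apply/and3P; split; last 1 first.
- apply/subsetP => -[z1 z2]; rewrite !inE /= => /andP[z1i z2j].
  have -> : z2 = j :> nat by lia.
  have : [|| z1 == i :> nat, z1 == i.+1 :> nat | z1 == i.+2 :> nat] by lia.
  rewrite /covered; case/or3P => /eqP ->; rewrite ?ai ?(negbTE ai1) ?(negbTE ai2); lia.
- rewrite inE /is_tile; apply/orP; right; apply/existsP; exists (Ordinal lti7).
  by apply/existsP; exists (Ordinal ltjn1); rewrite /= i36 eqxx andbT; lia.
- by rewrite inE /=; lia.
Qed.

Lemma tiles_at_hole A :
  (A \in tiles13 n) && (hole \in A) && (A \subset region n j a b c) =
  (htile_fits && (A == htile n j i)) || (vtile_fits && (A == vtile n j i)).
Proof.
apply/idP/idP.
- case/andP => /andP[]; rewrite inE /is_tile.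
  by case/orP => [/block13_at_hole|/block31_at_hole] At hA /(At hA) ->; rewrite ?orbT.
- case/orP => /andP[fits /eqP ->].
  + by case/and3P: (htile_at_hole fits) => -> -> ->.
  + by case/and3P: (vtile_at_hole fits) => -> -> ->.
Qed.

End TilesAtHole.

Section RegionSteps.
Variables (n j : nat) (a b c : seq bool) (i : nat).

Lemma region_setD_htile :
  region n j a b c :\: htile n j i = region n j (setbit a i) (setbit b i) (setbit c i).
Proof.
apply/setP => -[z1 z2]; rewrite !inE /= /covered !bit_setbit.
case: (eqVneq (z1 : nat) i) => [->|z1i]; rewrite ?eqxx /=; first by apply/idP/idP; lia.
by have -> : (i <= z1 < i + 1) = false by lia.
Qed.

Lemma region_setD_vtile :
  region n j a b c :\: vtile n j i = region n j (setbit (setbit (setbit a i) i.+1) i.+2) b c.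
Proof.
apply/setP => -[z1 z2]; rewrite !inE /= /covered !bit_setbit.
case: (boolP (i <= z1 < i + 3)) => z1i /=.
  have : [|| z1 == i :> nat, z1 == i.+1 :> nat | z1 == i.+2 :> nat] by lia.
  by case/or3P => /eqP ->; rewrite ?eqxx /= ?orbT; apply/idP/idP; lia.
have [-> -> ->] : [/\ (z1 == i :> nat) = false, (z1 == i.+1 :> nat) = false
                    & (z1 == i.+2 :> nat) = false] by split; lia.
by [].
Qed.

Lemma htile_neq_vtile : j < n -> i.+2 < 6 -> htile n j i != vtile n j i.
Proof.
move=> ltjn lti2; have lti1 : i.+1 < 6 by lia.
by apply/negP => /eqP/setP/(_ (Ordinal lti1, Ordinal ltjn)); rewrite !inE /=; lia.
Qed.

Lemma region_full_column : (forall k, k < 6 -> bit a k) ->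
  region n j a b c = region n j.+1 b c [::].
Proof.
move=> afull; apply/setP => -[z1 z2]; rewrite !inE /= /covered bit_nil afull //.
by apply/idP/idP; lia.
Qed.

End RegionSteps.

Lemma sum_guarded_pair (T : finType) (x y : T) (bx by_ : bool) (F : T -> nat) :
  (bx -> by_ -> x != y) ->
  \sum_(A | (bx && (A == x)) || (by_ && (A == y))) F A =
  (if bx then F x else 0) + (if by_ then F y else 0).
Proof.
case: bx; case: by_ => /= xy.
- rewrite (bigD1 x) ?eqxx //= (eq_bigl (pred1 y)) ?big_pred1_eq // => A.
  by case: (eqVneq A x) => [->|] /=; rewrite ?(negbTE (xy isT isT)) ?andbT.
- by rewrite (eq_bigl (pred1 x)) ?big_pred1_eq ?addn0 // => A; rewrite orbF.
- by rewrite big_pred1_eq.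
- by rewrite big_pred0.
Qed.

(* Expanding along the lowest free cell of column j. *)
Lemma ntilings_region n j (ltjn : j < n) f a b c : nholes a < f ->
  ntilings (tiles13 n) (region n j a b c) =
  sumn [seq ntilings (tiles13 n) (region n j.+1 t.1 t.2 [::])
       | t <- fill_column (j + 3 <= n) f a b c].
Proof.
elim: f a b c => [|f IHf] a b c // holes_f /=; set i := find negb a.
case: ifP => i6.
  rewrite (@region_full_column n j a b c) /= ?addn0 // => k ltk6.
  exact/bit_before_hole/(leq_trans ltk6 i6).
have lti6 : i < 6 by lia.
have ai := bit_find_hole lti6.
rewrite (ntilings_pblock _ (hole_in_region b c ltjn lti6 ai)).
rewrite (eq_bigl _ _ (tiles_at_hole b c ltjn lti6 ai (@bit_before_hole a))).
rewrite sum_guarded_pair; last first.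
  by move=> _ /andP[/andP[i36 _] _]; apply: htile_neq_vtile; lia.
have holes_a := nholes_setbit lti6 ai.
rewrite map_cat sumn_cat /htile_fits /vtile_fits; congr (_ + _).
  by case: ifP => _ //; rewrite region_setD_htile IHf //; lia.
case: ifP => _ //; rewrite region_setD_vtile IHf //.
have := nholes_setbit_le (setbit a i) i.+1.
have := nholes_setbit_le (setbit (setbit a i) i.+1) i.+2.
lia.
Qed.

Definition state := (seq bool * seq bool)%type.

Definition init_state : state := ([::], [::]).

(* Transfer-matrix count of the tilings of the last m columns from a pair of
   profiles; tiles reach across only when at least 3 columns remain. *)
Fixpoint ncompletions (m : nat) (s : state) : nat :=
  if m is m'.+1
  then sumn [seq ncompletions m' t | t <- fill_column (2 < m) 7 s.1 s.2 [::]]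
  else 1.

Lemma ncompletionsS m s : ncompletions m.+1 s =
  sumn [seq ncompletions m t | t <- fill_column (2 < m.+1) 7 s.1 s.2 [::]].
Proof. by []. Qed.

Lemma ntilings_region_ncompletions n m : forall j s, j + m = n ->
  ntilings (tiles13 n) (region n j s.1 s.2 [::]) = ncompletions m s.
Proof.
elim: m => [|m IHm] j s jmn.
  rewrite (_ : region _ _ _ _ _ = set0) ?ntilings0 //.
  by apply/setP => -[z1 z2]; rewrite !inE /=; have := ltn_ord z2; lia.
rewrite (@ntilings_region n j _ 7 _ _ _ (nholes_lt7 s.1)) ?ncompletionsS; last by lia.
have -> : (2 < m.+1) = (j + 3 <= n) by lia.
by congr sumn; apply/eq_in_map => t _; apply: IHm; lia.
Qed.

Lemma ntilings_ncompletions n : ntilings (tiles13 n) setT = ncompletions n init_state.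
Proof.
rewrite -(@ntilings_region_ncompletions n n 0) //; congr ntilings.
by apply/setP => -[z1 z2]; rewrite !inE /= /covered !bit_nil !andbF.
Qed.

Local Open Scope ring_scope.

Definition successors (s : state) : seq state := fill_column true 7 s.1 s.2 [::].

Lemma ncompletions_successors m s : (2 < m)%N ->
  (ncompletions m s)%:R = \sum_(t <- successors s) (ncompletions m.-1 t)%:R :> int.
Proof. by case: m => // m lt2m; rewrite ncompletionsS lt2m sumnE big_map natr_sum. Qed.

(* Integer combinations of states, as weighted lists with possible repetitions. *)
Definition lincomb := seq (state * int).

Definition lc_eval (l : lincomb) (F : state -> int) : int := \sum_(p <- l) p.2 * F p.1.

Definition lc_step (l : lincomb) : lincomb :=
  flatten [seq [seq (t, p.2) | t <- successors p.1] | p <- l].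

Lemma lc_eval_step l F :
  lc_eval (lc_step l) F = lc_eval l (fun s => \sum_(t <- successors s) F t).
Proof.
rewrite /lc_eval big_flatten big_map; apply: eq_bigr => p _.
by rewrite big_map mulr_sumr.
Qed.

Fixpoint lc_insert (p : state * int) (l : lincomb) : lincomb :=
  if l is q :: l' then
    if q.1 == p.1 then (q.1, q.2 + p.2) :: l' else q :: lc_insert p l'
  else [:: p].

Lemma lc_eval_insert p l F : lc_eval (lc_insert p l) F = p.2 * F p.1 + lc_eval l F.
Proof.
rewrite /lc_eval; elim: l => [|q l IHl] /=; first by rewrite big_seq1 big_nil addr0.
case: eqP => [qp|_]; rewrite !big_cons /= ?IHl; last by rewrite addrCA.
by rewrite qp; ring.
Qed.

Definition lc_collect (l : lincomb) : lincomb := foldr lc_insert [::] l.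

Lemma lc_eval_collect l F : lc_eval (lc_collect l) F = lc_eval l F.
Proof.
elim: l => [|p l IHl] //=.
by rewrite lc_eval_insert IHl /lc_eval big_cons.
Qed.

Lemma lc_eval_zero l F : all (fun p => p.2 == 0) l -> lc_eval l F = 0.
Proof. by move/allP => l0; apply: big1_seq => p /andP[_ /l0 /eqP ->]; rewrite mul0r. Qed.

(* The row vector of the k-th power of the transfer matrix at the initial state. *)
Definition lc_power (k : nat) : lincomb :=
  iter k (fun l => lc_collect (lc_step l)) [:: (init_state, 1)].

Lemma ncompletions_lc_power k m : (k + 2 <= m)%N ->
  (ncompletions m init_state)%:R = lc_eval (lc_power k) (fun s => (ncompletions (m - k) s)%:R).
Proof.
elim: k => [|k IHk] le_km; first by rewrite /lc_eval big_seq1 subn0 mul1r.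
rewrite IHk; last by lia.
rewrite /lc_power iterS -/(lc_power k) lc_eval_collect lc_eval_step.
apply: eq_bigr => s _; rewrite ncompletions_successors; last by lia.
by congr (_ * _); apply: eq_bigr => t _; rewrite (_ : (m - k).-1 = m - k.+1)%N //; lia.
Qed.

Definition den_seq : seq int :=
  [:: 1; 0; -1; 0; -1; 0; -7; 0; 1; 0; 5; 0; 10; 0; 1; 0; -3; 0; -5; 0; -1; 0; 1; 0; 1].

Definition num_seq : seq int :=
  [:: 1; 0; 0; 0; -1; 0; -3; 0; 0; 0; 2; 0; 3; 0; 0; 0; -1; 0; -1].

Lemma gf_den_coef k : gf_den`_k = den_seq`_k.
Proof.
rewrite /gf_den !coefD !coefN !coefZ !coefXn coef1.
do 25 (case: k => [|k]; first by vm_compute).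
by rewrite /= nth_nil !mulr0 !subr0 ?addr0.
Qed.

Lemma gf_num_expand : gf_num =
  1 - 'X^4 - 'X^6 *+ 3 + 'X^10 *+ 2 + 'X^12 *+ 3 - 'X^16 - 'X^18 :> {poly int}.
Proof. by rewrite /gf_num; ring. Qed.

Lemma gf_num_coef k : gf_num`_k = num_seq`_k.
Proof.
rewrite gf_num_expand !coefD !coefN !coefMn !coefXn coef1.
do 19 (case: k => [|k]; first by vm_compute).
by rewrite /= nth_nil mul0rn !addr0 ?subr0.
Qed.

Lemma den_seq_odd : all (fun k => odd k ==> (den_seq`_k == 0)) (iota 0 25).
Proof. by []. Qed.

Definition T6 (N : nat) : int := if odd N then 0 else (ncompletions N./2 init_state)%:R.

Lemma T13_6_T6 N : (T13_6 N)%:R = T6 N.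
Proof.
rewrite /T13_6 /T6; case: ifP => oddN //.
by rewrite -{2}(even_halfK (negbT oddN)) num_tilings_ntilings ntilings_ncompletions.
Qed.

Lemma T6_double_sub n k : (k <= n.*2)%N ->
  T6 (n.*2 - k) = if odd k then 0 else (ncompletions (n - k./2) init_state)%:R.
Proof.
move=> le_k2n; rewrite /T6 oddB // odd_double /=; case: ifP => // oddk.
by rewrite -{1}(even_halfK (negbT oddk)) -doubleB doubleK.
Qed.

(* For n >= 14, [T6 (2n - k)] is the row [lc_power (12 - k/2)] evaluated at
   [ncompletions (n - 12)]; so the vanishing of this den_seq-weighted combination
   of rows is the linear recurrence with characteristic coefficients gf_den. *)
Definition recurrence_certificate : lincomb :=
  flatten [seq [seq (p.1, den_seq`_k * p.2)
               | p <- if odd k then [::] else lc_power (12 - k./2)] | k <- iota 0 25].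

Lemma recurrence_certificate_vanishes :
  all (fun p => p.2 == 0) (lc_collect recurrence_certificate).
Proof. by vm_compute. Qed.

Lemma T6_recurrence n : (14 <= n)%N -> \sum_(0 <= k < 25) den_seq`_k * T6 (n.*2 - k) = 0.
Proof.
move=> le14n; set G := fun s => (ncompletions (n - 12) s)%:R : int.
rewrite -[in RHS](lc_eval_zero G recurrence_certificate_vanishes) lc_eval_collect.
rewrite /lc_eval big_flatten big_map /index_iota subn0.
apply: eq_big_seq => k; rewrite mem_iota => /andP[_ lt_k25].
rewrite big_map; under eq_bigr do rewrite /= -mulrA.
rewrite -mulr_sumr T6_double_sub -?muln2; last by lia.
case: ifP => _; first by rewrite big_nil.
rewrite (@ncompletions_lc_power (12 - k./2) (n - k./2)); last by lia.
congr (_ * _); apply: eq_bigr => s _.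
by rewrite /G (_ : n - 12 = n - k./2 - (12 - k./2))%N //; lia.
Qed.

Lemma den_T6_conv_tail N : (28 <= N)%N ->
  \sum_(k < N.+1) den_seq`_k * T6 (N - k) = 0.
Proof.
move=> le28N; rewrite -(big_mkord xpredT (fun k => den_seq`_k * T6 (N - k))).
rewrite (@big_cat_nat _ _ _ 25) //=; last by lia.
rewrite [X in _ + X]big_nat_cond [X in _ + X]big1 ?addr0; last first.
  by move=> k /andP[/andP[le25k _] _]; rewrite nth_default ?mul0r.
case: (boolP (odd N)) => [oddN|evenN].
  rewrite big_nat_cond big1 // => k /andP[/andP[_ lt_k25] _].
  have := allP den_seq_odd k; rewrite mem_iota lt_k25 => /(_ isT).
  case: (boolP (odd k)) => [_ /eqP -> |evenk _]; first by rewrite mul0r.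
  by rewrite /T6 oddB ?oddN ?(negbTE evenk) ?mulr0 //; lia.
rewrite -(even_halfK evenN) T6_recurrence //.
by have := odd_double_half N; rewrite (negbTE evenN); lia.
Qed.

Lemma den_T6_conv_init :
  all (fun N => foldr +%R 0 [seq den_seq`_k * T6 (N - k) | k <- iota 0 N.+1] == num_seq`_N)
      (iota 0 28).
Proof. by vm_compute. Qed.

Theorem mainTheorem3 :
  forall N : nat,
    \sum_(k < N.+1) gf_den`_k * ((T13_6 (N - k)%N)%:R : int) = gf_num`_N.
Proof.
move=> N; rewrite gf_num_coef.
under eq_bigr do rewrite gf_den_coef T13_6_T6.
have [ltN28|le28N] := ltnP N 28; last first.
  by rewrite nth_default ?den_T6_conv_tail // (leq_trans _ le28N).
have /allP/(_ N) := den_T6_conv_init; rewrite mem_iota ltN28 => /(_ isT) /eqP <-.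
by rewrite foldrE big_map -(big_mkord xpredT (fun k => den_seq`_k * T6 (N - k))).
Qed.
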